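(* Let $G$ be the graph with vertex set $\{a_i,b_i,c_i : i\in[4]\}\cup\{q_i^j,r_i^j : i\in[4], j\in[2]\}$ and edges: the three four-cycles $A$: $a_ia_{i\bmod 4+1}$, $B$: $b_ib_{i\bmod 4+1}$, $C$: $c_ic_{i\bmod 4+1}$ ($i\in[4]$); $q_i^j a_k, q_i^j b_k, q_i^j c_k$ for all $i,k\in[4]$, $j\in[2]$; $r_i^jq_i^j$; and $r_i^ja_i, r_i^ja_{i\bmod 4+1}, r_i^jb_i, r_i^jb_{i\bmod 4+1}, r_i^jc_i, r_i^jc_{i\bmod 4+1}$ for $i\in[4],j\in[2]$. Let $Q=\{q_i^j : i\in[4],j\in[2]\}$. Suppose $(A,\mathcal{D})$ is a planar geometric storyplan of $G$ (here $A(\cdot)$ denotes the visible-interval function), and let $I=\{A(q) : q\in Q\}$. Then there exists a set $I'\subset I$ with $|I'|\ge 6$ such that for every $[s,e]\in I'$ and every $t\in[s,e]$, all vertices of the three four-cycles $A$, $B$ and $C$ are visible at $t$.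
   Context: A storyplan of a graph $G$ on time steps $[\ell]$ is a pair $(A,\mathcal{D})$ where $A$ assigns to each vertex $v$ a nonempty interval $A(v)\subseteq[\ell]$ of consecutive integers ($v$ is visible at each $t\in A(v)$), adjacent vertices have intersecting intervals, and $\mathcal{D}$ assigns one fixed point to each vertex and one fixed curve to each edge. The frame at $t$ is the drawing under $\mathcal{D}$ of $G[\{v : t\in A(v)\}]$. The storyplan is planar geometric if every frame is a planar drawing with all edges straight-line segments. *)

From mathcomp Require Import all_boot all_order all_algebra.
Set Implicit Arguments. Unset Strict Implicit. Unset Printing Implicit Defensive.
Import Order.TTheory GRing.Theory Num.Theory.

(* Vertex set of G (0-based indices: 'I_4 stands for [4], 'I_2 for [2]).
   cyc k i : i-th vertex of the four-cycle k (k = 0,1,2 for A,B,C: a_i,b_i,c_i)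
   qv i j  : q_i^j,   rv i j : r_i^j. *)
Definition V : finType := ((('I_3 * 'I_4) + ('I_4 * 'I_2)) + ('I_4 * 'I_2))%type.
Definition cyc (k : 'I_3) (i : 'I_4) : V := inl (inl (k, i)).
Definition qv (i : 'I_4) (j : 'I_2) : V := inl (inr (i, j)).
Definition rv (i : 'I_4) (j : 'I_2) : V := inr (i, j).

(* cyclic successor: i |-> i mod 4 + 1 in 1-based indexing *)
Definition nxt (i : 'I_4) : 'I_4 := ordS i.

(* one orientation of each edge *)
Definition edge0 (x y : V) : bool :=
  match x, y with
  | inl (inl (k, i)), inl (inl (k', i')) => (k == k') && (i' == nxt i)
  | inl (inr _), inl (inl _) => true
  | inr (i, j), inl (inr (i', j')) => (i == i') && (j == j')
  | inr (i, _), inl (inl (_, i')) => (i' == i) || (i' == nxt i)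
  | _, _ => false
  end.

Definition adj (x y : V) : bool := edge0 x y || edge0 y x.

Section Geometry.
Variable R : realFieldType.
Local Open Scope ring_scope.

Definition on_seg (z p1 p2 : R * R) : Prop :=
  exists l : R, 0 <= l /\ l <= 1 /\
    z.1 = (1 - l) * p1.1 + l * p2.1 /\ z.2 = (1 - l) * p1.2 + l * p2.2.
End Geometry.

(* A : V -> nat * nat encodes the interval [(A v).1, (A v).2] *)
Definition visible (A : V -> nat * nat) (v : V) (t : nat) : bool :=
  ((A v).1 <= t <= (A v).2)%N.

Definition storyplan_intervals (l : nat) (A : V -> nat * nat) : Prop :=
  (forall v, 1 <= (A v).1 /\ (A v).1 <= (A v).2 /\ (A v).2 <= l)%N /\
  (forall u v, adj u v -> exists t, visible A u t /\ visible A v t).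

(* The frame at t, i.e. the drawing of G[{v : t in A(v)}] with vertex v at
   point p v and every edge uv drawn as the segment [p u, p v], is a planar
   straight-line drawing. *)
Definition frame_planar (R : realFieldType) (A : V -> nat * nat)
    (p : V -> R * R) (t : nat) : Prop :=
  (forall u v, visible A u t -> visible A v t -> u <> v -> p u <> p v) /\
  (forall u v w, adj u v -> visible A u t -> visible A v t -> visible A w t ->
      w <> u -> w <> v -> ~ on_seg (p w) (p u) (p v)) /\
  (forall u v w x, adj u v -> adj w x ->
      visible A u t -> visible A v t -> visible A w t -> visible A x t ->
      ~ ((u = w /\ v = x) \/ (u = x /\ v = w)) ->
      forall z, on_seg z (p u) (p v) -> on_seg z (p w) (p x) ->
        exists y, (y = u \/ y = v) /\ (y = w \/ y = x) /\ z = p y).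

(* (A, D) is a planar geometric storyplan of G on time steps [l]; D is given
   by the vertex positions p (edges are the straight segments). *)
Definition planar_geometric_storyplan (R : realFieldType) (l : nat)
    (A : V -> nat * nat) (p : V -> R * R) : Prop :=
  storyplan_intervals l A /\
  (forall t, (1 <= t <= l)%N -> frame_planar A p t).

(* In a planar straight-line frame, let Z1 and Z2 be visible vertices with many visible
   common neighbours.  At most one of these lies on the line Z1 Z2, so at least half of the
   others lie on one side of it, and the edges from Z1 and Z2 to them form a fan of n
   non-crossing triangles over the base Z1 Z2.  The triangles are nested, which ranks the fan
   vertices 0, ..., n-1 and cuts the plane into n regions arranged in a cycle.  A vertex
   borders only the two regions around its rank, so an edge between fan vertices joins
   cyclically consecutive ranks, an edge leaving the fan starts at rank 0 or n-1, and a vertex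
   outside the fan is adjacent to at most two fan vertices.  Hence three visible vertices
   have at most six common visible neighbours, and two visible vertices cannot both see all
   twelve vertices of A, B and C: a 4-cycle cannot wind around the n >= 6 regions, so each of
   the at least three fan vertices on the cycles would have rank 0 or n-1.
   The first fact shows that some q-interval ends before another starts; then all cycle
   vertices are visible throughout a window [M1, M2] met by every q-interval.  By the second
   fact no two q's are visible together inside the window, so at most one q-interval sticks
   out on each side, and the other six lie in the window and are pairwise disjoint. *)

From mathcomp Require Import all_boot all_order all_algebra.
From mathcomp Require Import ring lra zify.

Set Implicit Arguments. Unset Strict Implicit. Unset Printing Implicit Defensive.
Import Order.TTheory GRing.Theory Num.Theory.

Lemma count_lt_subpred (T : eqType) (a1 a2 : pred T) (s : seq T) :
  {in s, subpred a1 a2} -> (exists2 x, x \in s & a2 x && ~~ a1 x) ->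
  (count a1 s < count a2 s)%N.
Proof.
move=> sub [x xs x21]; have := count_predUI a1 (predD a2 a1) s.
rewrite (@eq_count _ (predI _ _) pred0); last by move=> y /=; case: (a1 y); rewrite ?andbF.
rewrite (@eq_in_count _ (predU _ _) a2); last first.
  by move=> y ys /=; case: (boolP (a1 y)) => [/(sub y ys) ->|].
have : (0 < count (predD a2 a1) s)%N by rewrite -has_count; apply/hasP; exists x; rewrite //= andbC.
by rewrite count_pred0; lia.
Qed.

Lemma exists_two_of_count (T : eqType) (P : pred T) (s : seq T) : uniq s -> (2 <= count P s)%N ->
  exists a b, [/\ a \in s, b \in s, a != b, P a & P b].
Proof.
move=> us; rewrite -size_filter.
case ef: (filter P s) (filter_uniq P us) => [|a [|b r]] //= /andP[ha _] _.
have /[!mem_filter] /andP[Pa sa] : a \in filter P s by rewrite ef mem_head.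
have /[!mem_filter] /andP[Pb sb] : b \in filter P s by rewrite ef !inE eqxx orbT.
by exists a, b; split=> //; apply: contraNneq ha => ->; rewrite mem_head.
Qed.

Lemma exists_three_of_size (T : eqType) (s : seq T) : uniq s -> (3 <= size s)%N ->
  exists a b c, [/\ a \in s, b \in s, c \in s & [/\ a <> b, a <> c & b <> c]].
Proof.
case: s => [|a [|b [|c r]]] //= /and4P[ha hb _ _] _.
exists a, b, c; rewrite !inE !eqxx !orbT; split=> //; split=> e; subst.
- by rewrite mem_head in ha.
- by rewrite !inE eqxx orbT in ha.
- by rewrite mem_head in hb.
Qed.

Lemma count_le1 (T : eqType) (P : pred T) (s : seq T) : uniq s ->
  {in s &, forall x y, x != y -> P x -> P y -> False} -> (count P s <= 1)%N.
Proof.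
move=> us excl; rewrite leqNgt; apply/negP => /(exists_two_of_count us) [x [y [xs ys xy Px Py]]].
exact: excl xs ys xy Px Py.
Qed.

(** * Segments, orientation and triangles *)

Section Plane.
Variable R : realFieldType.
Local Open Scope ring_scope.
Implicit Types (a b c d z e P Q E : R * R) (l : R).

Definition orient a b c : R := (b.1 - a.1) * (c.2 - a.2) - (b.2 - a.2) * (c.1 - a.1).

Definition lerp l a b : R * R := ((1 - l) * a.1 + l * b.1, (1 - l) * a.2 + l * b.2).

Lemma on_seg_lerp l a b : 0 <= l -> l <= 1 -> on_seg (lerp l a b) a b.
Proof. by move=> l0 l1; exists l. Qed.

Lemma lerp0 a b : lerp 0 a b = a.
Proof. by apply: injective_projections; rewrite /lerp /=; ring. Qed.

Lemma lerp1 a b : lerp 1 a b = b.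
Proof. by apply: injective_projections; rewrite /lerp /=; ring. Qed.

Lemma orient_lerp a b l c d :
  orient a b (lerp l c d) = (1 - l) * orient a b c + l * orient a b d.
Proof. rewrite /orient /lerp /=; ring. Qed.

Lemma orient_swap a b c : orient a b c = - orient b a c.
Proof. by rewrite /orient; ring. Qed.

Lemma on_seg_sym z a b : on_seg z a b -> on_seg z b a.
Proof.
move=> [l [l0 [l1 [e1 e2]]]]; exists (1 - l); rewrite e1 e2; do ! split; try lra.
Qed.

Lemma on_seg_l a b : on_seg a a b.
Proof. by rewrite -{1}(lerp0 a b); apply: on_seg_lerp; lra. Qed.

Lemma on_seg_r a b : on_seg b a b.
Proof. by rewrite -{1}(lerp1 a b); apply: on_seg_lerp; lra. Qed.

Lemma on_seg_trans e z a b : on_seg e a b -> on_seg z e a -> on_seg z a b.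
Proof.
move=> [l [l0 [l1 [e1 e2]]]] [m [m0 [m1 [f1 f2]]]].
exists ((1 - m) * l); rewrite f1 f2 e1 e2; do ! split; try nra; ring.
Qed.

Lemma lerp_between a b l1 l2 l : l1 <= l -> l <= l2 ->
  on_seg (lerp l a b) (lerp l1 a b) (lerp l2 a b).
Proof.
move=> h1 h2; have [e|ne] := eqVneq l1 l2.
  have -> : l = l1 by rewrite -e in h2; apply/eqP; rewrite eq_le h1 h2.
  exact: on_seg_l.
have d0 : l2 - l1 != 0 by rewrite subr_eq0 eq_sym.
exists ((l - l1) / (l2 - l1)); rewrite /lerp /=; do ! split; try (field; exact: d0).
- by apply: divr_ge0; lra.
- by rewrite ler_pdivrMr ?mul1r; lra.
Qed.

Lemma collinear_lerp a b z : a != b -> orient a b z = 0 -> exists l, z = lerp l a b.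
Proof.
rewrite /orient => ab o.
have [d1|d1] := eqVneq (b.1 - a.1) 0.
  have d2 : b.2 - a.2 != 0.
    apply: contra ab => /eqP d2; apply/eqP/injective_projections; lra.
  exists ((z.2 - a.2) / (b.2 - a.2)).
  apply: injective_projections; rewrite /lerp /=; last by field.
  have : (b.2 - a.2) * (z.1 - a.1) = 0 by rewrite d1 mul0r sub0r in o; lra.
  move/eqP; rewrite mulf_eq0 (negbTE d2) /= subr_eq0 => /eqP ->.
  have -> : b.1 = a.1 by lra.
  ring.
exists ((z.1 - a.1) / (b.1 - a.1)).
apply: injective_projections; rewrite /lerp /=; first by field.
apply: (mulfI d1).
have -> : (b.1 - a.1) * ((1 - (z.1 - a.1) / (b.1 - a.1)) * a.2
    + (z.1 - a.1) / (b.1 - a.1) * b.2) = (b.1 - a.1) * a.2 + (b.2 - a.2) * (z.1 - a.1).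
  by field.
lra.
Qed.

Lemma collinear_segs_meet a b z w : a != b -> orient a b z = 0 -> orient a b w = 0 ->
  (forall E, on_seg E a z -> ~ on_seg E b w) ->
  (forall E, on_seg E a w -> ~ on_seg E b z) -> False.
Proof.
move=> ab /(collinear_lerp ab) [l ->] /(collinear_lerp ab) [m ->] h1 h2.
have [l0|l0] := lerP l 0.
  have := lerp_between a b l0 ler01; rewrite lerp0 lerp1 => /on_seg_sym.
  exact: h2 _ (on_seg_l _ _).
have [l1|l1] := lerP 1 l.
  have := lerp_between a b ler01 l1; rewrite lerp0 lerp1 => h.
  exact: h1 _ h (on_seg_l _ _).
have [m0|m0] := lerP m 0.
  have := lerp_between a b m0 ler01; rewrite lerp0 lerp1 => /on_seg_sym.
  exact: h1 _ (on_seg_l _ _).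
have [m1|m1] := lerP 1 m.
  have := lerp_between a b ler01 m1; rewrite lerp0 lerp1 => h.
  exact: h2 _ h (on_seg_l _ _).
have [lm|lm] := lerP l m.
  have := lerp_between a b (ltW l0) lm; rewrite lerp0 => h.
  exact: h2 _ h (on_seg_r _ _).
have := lerp_between a b (ltW m0) (ltW lm); rewrite lerp0 => h.
exact: h1 _ h (on_seg_r _ _).
Qed.

Lemma seg_cross a b c d :
  orient c d a * orient c d b < 0 -> orient a b c * orient a b d < 0 ->
  exists E, on_seg E a b /\ on_seg E c d.
Proof.
set u := orient c d a; set v := orient c d b; set u' := orient a b c; set v' := orient a b d.
move=> uv uv'.
have ratio01 (r s : R) : r * s < 0 -> r - s != 0 /\ 0 < r / (r - s) < 1.
  move=> rs; have rs0 : r - s != 0.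
    by apply: contraTneq rs => /eqP; rewrite subr_eq0 => /eqP ->; nra.
  split=> //; have [r0|r0] := ltP 0 r.
  - have sr : 0 < r - s by nra.
    by rewrite divr_gt0 ?ltr_pdivrMr ?mul1r //; nra.
  - have sr : 0 < - (r - s) by nra.
    by rewrite -divrNN divr_gt0 ?ltr_pdivrMr ?mul1r //; nra.
have [d1 /andP[l0 l1]] := ratio01 _ _ uv; have [d2 /andP[m0 m1]] := ratio01 _ _ uv'.
exists (lerp (u / (u - v)) a b); split; first by apply: on_seg_lerp; lra.
exists (u' / (u' - v')); do ! split; try lra;
  move: d1 d2; rewrite /u /v /u' /v' /lerp /orient /= => d1 d2; by field; rewrite d1 d2.
Qed.

Lemma orient_bary a b c z :
  orient a b c * z.1 = orient b c z * a.1 + orient c a z * b.1 + orient a b z * c.1 /\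
  orient a b c * z.2 = orient b c z * a.2 + orient c a z * b.2 + orient a b z * c.2.
Proof. by split; rewrite /orient; ring. Qed.

Lemma orient_sum a b c z : orient a b z + orient b c z + orient c a z = orient a b c.
Proof. by rewrite /orient; ring. Qed.

Lemma on_seg_right_side a b c z : 0 < orient a b c -> orient b c z = 0 ->
  0 <= orient a b z -> 0 <= orient c a z -> on_seg z c b.
Proof.
move=> D0 bz az cz; have D0' : orient a b c != 0 by rewrite gt_eqF.
have sum : orient a b z = orient a b c - orient c a z.
  by rewrite -(orient_sum a b c z) bz; ring.
have [e1 e2] := orient_bary a b c z; rewrite bz sum in e1 e2.
exists (orient c a z / orient a b c); do ! split.
- by rewrite divr_ge0 // ltW.
- by rewrite ler_pdivrMr // mul1r; lra.
- by rewrite -[z.1](mulKf D0') e1; field.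
- by rewrite -[z.2](mulKf D0') e2; field.
Qed.

Lemma on_seg_left_side a b c z : 0 < orient a b c -> orient c a z = 0 ->
  0 <= orient a b z -> 0 <= orient b c z -> on_seg z a c.
Proof.
move=> D0 cz az bz; apply: (@on_seg_right_side b c a) => //.
by have -> : orient b c a = orient a b c by rewrite /orient; ring.
Qed.

Definition in_tri a b c z : bool :=
  [&& 0 <= orient a b z, 0 < orient b c z & 0 < orient c a z].

Lemma in_tri_irr a b c : in_tri a b c c = false.
Proof. by rewrite /in_tri [orient b c c]/orient mulrC subrr ltxx andbF. Qed.

Lemma orient_change_apex a b c d z :
  orient a b c * orient b d z = orient b c z * orient a b d + orient a b z * orient b d c /\
  orient a b c * orient d a z = orient c a z * orient a b d + orient a b z * orient d a c.
Proof. by split; rewrite /orient; ring. Qed.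

Lemma in_tri_trans a b c d z : 0 < orient a b c -> 0 < orient a b d ->
  in_tri a b d c -> in_tri a b c z -> in_tri a b d z.
Proof.
move=> D0 D0' /and3P[_ bc ac] /and3P[az bz cz]; have [e1 e2] := orient_change_apex a b c d z.
by apply/and3P; split=> //; rewrite -(pmulr_rgt0 _ D0) ?e1 ?e2; nra.
Qed.

Lemma in_tri_base a b c d z : in_tri a b c z -> orient a b z = 0 -> 0 < orient a b d ->
  in_tri a b d z.
Proof.
move=> /and3P[_ bz cz] az D0'; have [e1 e2] := orient_change_apex a b c d z.
have D0 : 0 < orient a b c by rewrite -(orient_sum a b c z) az add0r addr_gt0.
by apply/and3P; split; rewrite ?az // -(pmulr_rgt0 _ D0) ?e1 ?e2 az; nra.
Qed.

Lemma in_tri_total a b c d : 0 < orient a b c -> 0 < orient a b d ->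
  (forall E, on_seg E a c -> ~ on_seg E b d) ->
  (forall E, on_seg E b c -> ~ on_seg E a d) ->
  in_tri a b c d || in_tri a b d c.
Proof.
move=> D0 D0' h1 h2.
have eb : orient b d c = - orient b c d by rewrite /orient; ring.
have ec : orient d a c = - orient c a d by rewrite /orient; ring.
have [b0|b0|b0] := ltgtP (orient b c d) 0.
- have [c0|c0|c0] := ltgtP (orient c a d) 0.
  + by apply/orP; right; apply/and3P; split; rewrite ?eb ?ec ?oppr_gt0 // ltW.
  + have [E [Ebc Ead]] : exists E, on_seg E b c /\ on_seg E a d; last by case: (h2 E Ebc Ead).
    apply: seg_cross.
    * have -> : orient a d b = - orient a b d by rewrite /orient; ring.
      have -> : orient a d c = orient c a d by rewrite /orient; ring.
      nra.
    * have -> : orient b c a = orient a b c by rewrite /orient; ring.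
      nra.
  + case: (h2 c (on_seg_r b c)).
    by apply: on_seg_left_side D0' _ (ltW D0) _; rewrite ?eb ?ec ?c0; lra.
- have [c0|c0|c0] := ltgtP (orient c a d) 0.
  + have [E [Eac Ebd]] : exists E, on_seg E a c /\ on_seg E b d; last by case: (h1 E Eac Ebd).
    apply: seg_cross.
    * have -> : orient b d a = orient a b d by rewrite /orient; ring.
      nra.
    * have -> : orient a c b = - orient a b c by rewrite /orient; ring.
      have -> : orient a c d = - orient c a d by rewrite /orient; ring.
      nra.
  + by apply/orP; left; apply/and3P; split=> //; apply: ltW.
  + case: (h1 d _ (on_seg_r b d)).
    exact: on_seg_left_side D0 c0 (ltW D0') (ltW b0).
- have [c0|c0] := ltP (orient c a d) 0.
  + case: (h1 c (on_seg_r a c)); apply: on_seg_sym.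
    by apply: on_seg_right_side D0' _ (ltW D0) _; rewrite ?eb ?ec ?b0; lra.
  + case: (h2 d _ (on_seg_r a d)); apply: on_seg_sym.
    exact: on_seg_right_side D0 b0 (ltW D0') c0.
Qed.

Lemma lerp_root P Q (gP gQ : R) : 0 <= gP -> gQ <= 0 -> gQ < gP ->
  let Z := lerp (gP / (gP - gQ)) P Q in
  on_seg Z P Q /\
  forall a b, orient a b Z = (gP * orient a b Q - gQ * orient a b P) / (gP - gQ).
Proof.
move=> P0 Q0 PQ Z; have d0 : 0 < gP - gQ by rewrite subr_gt0.
split; first by apply: on_seg_lerp; rewrite ?divr_ge0 ?ler_pdivrMr ?mul1r //; lra.
by move=> a b; rewrite /Z orient_lerp; field; rewrite gt_eqF.
Qed.

Lemma side_crossing_outside a b c P Q : 0 < orient a b c ->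
  0 <= orient a b P -> 0 < orient b c P -> 0 <= orient c a P -> orient b c Q <= 0 ->
  (forall E, on_seg E P Q -> ~ on_seg E c b) ->
  0 < orient a b P * orient b c Q - orient a b Q * orient b c P \/
  orient b c P * orient c a Q - orient b c Q * orient c a P < 0.
Proof.
move=> D0 aP bP cP bQ avoid.
case: (ltP 0 (orient a b P * orient b c Q - orient a b Q * orient b c P)) => [|h1]; [by left|].
right; rewrite ltNge; apply/negP => h2; have d0 : 0 < orient b c P - orient b c Q by lra.
have [/avoid + e] := lerp_root P Q (ltW bP) bQ (le_lt_trans bQ bP); apply.
apply: on_seg_right_side D0 _ _ _.
- by rewrite e [orient b c P * _]mulrC subrr mul0r.
- by rewrite e divr_ge0 //; nra.
- by rewrite e divr_ge0 //; nra.
Qed.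

Lemma bary_exit_signs (aP bP cP aQ bQ cQ : R) :
  0 <= aP -> 0 < bP -> 0 < cP -> aQ + bQ + cQ = aP + bP + cP ->
  [\/ aQ < 0, bQ <= 0 | cQ <= 0] ->
  (bQ <= 0 -> 0 < aP * bQ - aQ * bP \/ bP * cQ - bQ * cP < 0) ->
  (cQ <= 0 -> 0 < bP * cQ - bQ * cP \/ cP * aQ - cQ * aP < 0) ->
  [/\ aQ < 0, 0 < aP * bQ - aQ * bP & 0 < aP * cQ - aQ * cP].
Proof.
move=> a0 b0 c0 sum out hb hc.
have [bq|bq] := lerP bQ 0; have [cq|cq] := lerP cQ 0.
- by exfalso; case: (hb bq) => h1; case: (hc cq) => h2; nra.
- by case: (hb bq) => h1; [have aq : aQ < 0 by nra | exfalso; nra]; split=> //; nra.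
- by case: (hc cq) => h2; [exfalso; nra | have aq : aQ < 0 by nra]; split=> //; nra.
- have aq : aQ < 0 by case: out => // h; lra.
  by split=> //; nra.
Qed.

Lemma in_tri_exit a b c P Q : 0 < orient a b c -> in_tri a b c P -> ~~ in_tri a b c Q ->
  (forall E, on_seg E P Q -> ~ on_seg E a c /\ ~ on_seg E c b) ->
  orient a b Q < 0 /\ exists E, [/\ on_seg E P Q, orient a b E = 0 & in_tri a b c E].
Proof.
move=> D0 /and3P[aP bP cP] Qout avoid.
have D0' : 0 < orient b c a by have -> : orient b c a = orient a b c by rewrite /orient; ring.
have out : [\/ orient a b Q < 0, orient b c Q <= 0 | orient c a Q <= 0].
  case: (ltP (orient a b Q) 0) => [aQ|aQ]; first exact: Or31.
  case: (leP (orient b c Q) 0) => [bQ|bQ]; first exact: Or32.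
  case: (leP (orient c a Q) 0) => [cQ|cQ]; first exact: Or33.
  by move: Qout; rewrite /in_tri aQ bQ cQ.
have hb bQ := side_crossing_outside D0 aP bP (ltW cP) bQ (fun E h => (avoid E h).2).
have hc cQ := side_crossing_outside D0' (ltW bP) cP aP cQ (fun E h => (avoid E h).1).
have sum := etrans (orient_sum a b c Q) (esym (orient_sum a b c P)).
have [aQ bZ cZ] := bary_exit_signs aP bP cP sum out hb hc.
split=> //; have [ZPQ e] := lerp_root P Q aP (ltW aQ) (lt_le_trans aQ aP).
have aZ : orient a b (lerp (orient a b P / (orient a b P - orient a b Q)) P Q) = 0.
  by rewrite e [orient a b P * _]mulrC subrr mul0r.
eexists; split; [exact: ZPQ | exact: aZ |].
by apply/and3P; split; rewrite ?aZ // e divr_gt0 //; lra.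
Qed.

Lemma on_seg_lerp_end l a b : l < 1 -> on_seg b a (lerp l a b) -> a = b.
Proof.
move=> l1 [m [m0 [m1 [e1 e2]]]]; rewrite /lerp /= in e1 e2.
have k : 0 < 1 - m * l by case: (lerP 0 l) => l0; nra.
by apply: injective_projections; apply: (mulIf (lt0r_neq0 k)) => /=; lra.
Qed.

End Plane.

Definition adj_mod (n r r' : nat) : Prop := r' = r.+1 %% n \/ r = r'.+1 %% n.

Lemma adj_modC n r r' : adj_mod n r r' -> adj_mod n r' r.
Proof. by rewrite /adj_mod; tauto. Qed.

(* A vertex of rank r in a fan of n vertices borders the regions r and r + 1 modulo n. *)
Definition borders (n r d : nat) : Prop := d = r \/ d = r.+1 %% n.

Lemma succ_modE n r : r < n -> r.+1 %% n = if r.+1 == n then 0 else r.+1.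
Proof.
move=> rn; case: eqP => [->|/eqP ne]; first by rewrite modnn.
by rewrite modn_small // ltn_neqAle ne.
Qed.

Lemma adj_mod_no_4cycle n r0 r1 r2 r3 : 5 <= n ->
  r0 < n -> r1 < n -> r2 < n -> r3 < n -> r0 <> r2 -> r1 <> r3 ->
  adj_mod n r0 r1 -> adj_mod n r1 r2 -> adj_mod n r2 r3 -> ~ adj_mod n r3 r0.
Proof.
rewrite /adj_mod => n5 l0 l1 l2 l3.
rewrite !succ_modE //.
case: eqP; case: eqP; case: eqP; case: eqP; lia.
Qed.

Lemma borders_adj_mod n r r' d : r < n -> r' < n -> r <> r' ->
  borders n r d -> borders n r' d -> adj_mod n r r'.
Proof. by move=> l l'; rewrite /borders /adj_mod !succ_modE //; case: eqP; case: eqP; lia. Qed.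

Lemma borders0 n r : r < n -> borders n r 0 -> r = 0 \/ r = n.-1.
Proof. by move=> l; rewrite /borders succ_modE //; case: eqP; lia. Qed.

Lemma adj_mod_ends n r : 4 <= n -> r < n -> adj_mod n r 0 -> ~ adj_mod n r n.-1.
Proof.
rewrite /adj_mod => n4 rn; rewrite !succ_modE //; try lia.
by case: eqP; case: eqP; case: eqP; lia.
Qed.

Lemma borders_three n r1 r2 r3 d : r1 < n -> r2 < n -> r3 < n ->
  r1 <> r2 -> r1 <> r3 -> r2 <> r3 ->
  borders n r1 d -> borders n r2 d -> ~ borders n r3 d.
Proof.
move=> l1 l2 l3; rewrite /borders !succ_modE //.
case: eqP; case: eqP; case: eqP; lia.
Qed.

(** * Fans of triangles over a common base *)

Section Fan.
Variable R : realFieldType.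
Local Open Scope ring_scope.
Variables (T : eqType) (pt : T -> R * R) (a b : R * R) (S : seq T).
Hypothesis S_uniq : uniq S.
Hypothesis S_above : {in S, forall v, 0 < orient a b (pt v)}.
Hypothesis S_noncrossing : {in S &, forall v w, v <> w ->
  forall E, on_seg E a (pt v) -> ~ on_seg E b (pt w)}.

Local Notation n := (size S).

Definition on_fan E w : Prop := on_seg E a (pt w) \/ on_seg E (pt w) b.

(* The fan cuts the plane into n regions: depth P counts the triangles a b (pt v) containing
   P, and the innermost region (depth n) meets the outer one (depth 0) across the open base
   ]a, b[, so regions are indexed by depth modulo n and v borders regions rank v and
   rank v + 1. *)
Definition depth P : nat := count (fun v => in_tri a b (pt v) P) S.

Definition rank v : nat := depth (pt v).

Definition slot P : nat := depth P %% n.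

Lemma pt_inj : {in S &, injective pt}.
Proof.
move=> v w vS wS e; have [//|/eqP vw] := eqVneq v w.
by case: (S_noncrossing vS wS vw (on_seg_r a (pt v))); rewrite e; apply: on_seg_r.
Qed.

Lemma rank_lt v : v \in S -> (rank v < n)%N.
Proof.
move=> vS; rewrite /rank /depth -(count_predC (fun w => in_tri a b (pt w) (pt v))).
rewrite -[X in (X < _)%N]addn0 ltn_add2l -has_count.
by apply/hasP; exists v; rewrite //= in_tri_irr.
Qed.

Lemma rank_lt_in_tri v w : v \in S -> w \in S -> in_tri a b (pt v) (pt w) ->
  (rank v < rank w)%N.
Proof.
move=> vS wS vw; apply: count_lt_subpred.
  by move=> u uS uv; apply: in_tri_trans (S_above vS) (S_above uS) uv vw.
by exists v; rewrite // vw in_tri_irr.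
Qed.

Lemma rank_inj : {in S &, injective rank}.
Proof.
move=> v w vS wS e; have [//|/eqP vw] := eqVneq v w.
have vw' : w <> v by move=> e'; apply: vw.
case/orP: (in_tri_total (S_above vS) (S_above wS) (S_noncrossing vS wS vw)
  (fun E Ev Ew => S_noncrossing wS vS vw' Ew Ev)) => /rank_lt_in_tri.
- by move=> /(_ vS wS); rewrite e ltnn.
- by move=> /(_ wS vS); rewrite e ltnn.
Qed.

Lemma slot_below P : orient a b P <= 0 -> slot P = 0%N.
Proof.
move=> aP; have [/hasP [w wS wP]|] := boolP (has (fun v => in_tri a b (pt v) P) S).
  have aP0 : orient a b P = 0 by apply/eqP; rewrite eq_le aP; case/and3P: wP.
  rewrite /slot /depth (eq_in_count (a2 := predT)) ?count_predT ?modnn //.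
  by move=> u uS; apply: in_tri_base wP aP0 (S_above uS).
move/hasPn => none; rewrite /slot /depth (eq_in_count (a2 := pred0)) ?count_pred0 ?mod0n //.
by move=> u /none /negbTE.
Qed.

Lemma depth_rem P v : v \in S ->
  depth P = (in_tri a b (pt v) P + count (fun w => in_tri a b (pt w) P) (rem v S))%N.
Proof. by move=> vS; rewrite /depth (permP (perm_to_rem vS)). Qed.

Lemma slot_borders P v : v \in S ->
  (forall E w, on_seg E (pt v) P -> w \in S -> on_fan E w -> w = v /\ E = pt v) ->
  borders n (rank v) (slot P).
Proof.
move=> vS only_v.
have remS w : w \in rem v S -> w \in S /\ w <> v.
  by rewrite mem_rem_uniq // => /andP[/eqP].
have avoid w : w \in rem v S -> forall E, on_seg E (pt v) P ->
    ~ on_seg E a (pt w) /\ ~ on_seg E (pt w) b.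
  move=> /remS [wS wv] E EvP; split=> Ew.
  - by case: (only_v E w EvP wS (or_introl Ew)).
  - by case: (only_v E w EvP wS (or_intror Ew)).
have not_below w : w \in rem v S -> forall E, on_seg E (pt v) P -> in_tri a b (pt w) E ->
    in_tri a b (pt w) (pt v).
  move=> wv E EvP wE; apply: contraT => /(in_tri_exit (S_above (remS w wv).1) wE) [].
  - by move=> F FEv; apply: avoid wv F (on_seg_trans EvP FEv).
  - by rewrite ltNge (ltW (S_above vS)).
(* Leaving another triangle on the way from pt v to P is only possible through its open base;
   then P is below the base, while pt v lies in every triangle but its own. *)
rewrite /rank /slot !(depth_rem _ vS) in_tri_irr add0n.
have [/hasP [w wv /andP[wy wP]]|] :=
  boolP (has (fun w => in_tri a b (pt w) (pt v) && ~~ in_tri a b (pt w) P) (rem v S)).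
  have [Pbelow [E [EvP aE wE]]] := in_tri_exit (S_above (remS w wv).1) wy wP (avoid w wv).
  have := slot_below (ltW Pbelow); rewrite /slot (depth_rem _ vS) => ->.
  rewrite (eq_in_count (a2 := predT)) ?count_predT ?size_rem //; last first.
    by move=> u uv; apply: not_below uv E EvP (in_tri_base wE aE (S_above (remS u uv).1)).
  by right; rewrite prednK ?modnn //; case: (S) vS.
move/hasPn => same; rewrite (@eq_in_count _ _ (fun w => in_tri a b (pt w) (pt v))).
  have := rank_lt vS; rewrite /rank (depth_rem _ vS) in_tri_irr add0n => lt.
  by case: (in_tri _ _ _ P); [right | left; rewrite modn_small].
move=> w wv; apply/idP/idP => [|wy]; first exact: not_below wv P (on_seg_r _ _).
by apply: contraTT (same w wv) => wP; rewrite wy wP.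
Qed.

Lemma rank_adj_mod s s' : s \in S -> s' \in S -> s <> s' ->
  (forall E w, on_seg E (pt s) (pt s') -> w \in S -> on_fan E w ->
     (w = s /\ E = pt s) \/ (w = s' /\ E = pt s')) ->
  adj_mod n (rank s) (rank s').
Proof.
move=> sS s'S ss' only_ends.
have ptss' : pt s <> pt s' by move/(pt_inj sS s'S).
have half : (1 / 2 : R) < 1 by rewrite ltr_pdivrMr ?mul1r ?ltr1n.
have M_on : on_seg (lerp (1 / 2) (pt s) (pt s')) (pt s) (pt s').
  by apply: on_seg_lerp; rewrite ?divr_ge0 ?ltW.
have M_sym : lerp (1 / 2) (pt s) (pt s') = lerp (1 / 2) (pt s') (pt s).
  by apply: injective_projections; rewrite /lerp /=; field.
apply: (borders_adj_mod (rank_lt sS) (rank_lt s'S) (fun e => ss' (rank_inj sS s'S e))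
  (slot_borders (P := lerp (1 / 2) (pt s) (pt s')) sS _) (slot_borders s'S _)).
- move=> E w EsM wS /(only_ends E w (on_seg_trans M_on (on_seg_sym EsM)) wS) [//|[_ Es']].
  by rewrite Es' in EsM; case: ptss'; apply: on_seg_lerp_end half EsM.
- rewrite M_sym in M_on *; move=> E w EsM wS; move/on_seg_sym: M_on => M_on.
  move/(only_ends E w (on_seg_sym (on_seg_trans M_on (on_seg_sym EsM))) wS) => [[_ Es]|//].
  by rewrite Es in EsM; case: ptss'; symmetry; apply: on_seg_lerp_end half EsM.
Qed.

End Fan.

Lemma adj_sym u v : adj u v = adj v u.
Proof. by rewrite /adj orbC. Qed.

Lemma nxt_neq (i : 'I_4) : nxt i != i.
Proof. by case: i => [[|[|[|[|m]]]] h]. Qed.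

Lemma nxt4 (i : 'I_4) : nxt (nxt (nxt (nxt i))) = i.
Proof. by apply/val_inj; case: i => [[|[|[|[|m]]]] h]. Qed.

Lemma nxt2_neq (i : 'I_4) : nxt (nxt i) != i.
Proof. by case: i => [[|[|[|[|m]]]] h]. Qed.

Lemma nxt3_neq (i : 'I_4) : nxt (nxt (nxt i)) != i.
Proof. by case: i => [[|[|[|[|m]]]] h]. Qed.

Lemma adj_irr u : adj u u = false.
Proof.
case: u => [[[k i]|[i j]]|[i j]] //=; rewrite /adj /= orbb ?andbb //.
by rewrite eq_sym (negbTE (nxt_neq i)) andbF.
Qed.

Lemma adj_qc i j k i' : adj (qv i j) (cyc k i').
Proof. by []. Qed.

Lemma adj_cc k i : adj (cyc k i) (cyc k (nxt i)).
Proof. by rewrite /adj /= !eqxx. Qed.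

Lemma cyc_inj k i k' i' : cyc k i = cyc k' i' -> k = k' /\ i = i'.
Proof. by case. Qed.

Definition cycle_vertices : seq V := [seq cyc x.1 x.2 | x <- enum {: 'I_3 * 'I_4}].

Lemma cycle_vertices_uniq : uniq cycle_vertices.
Proof. by rewrite map_inj_uniq ?enum_uniq // => [[k i] [k' i']] /cyc_inj [/= -> ->]. Qed.

Lemma size_cycle_vertices : size cycle_vertices = 12.
Proof. by rewrite size_map -cardE card_prod !card_ord. Qed.

Lemma mem_cycle_vertices k i : cyc k i \in cycle_vertices.
Proof. by apply/mapP; exists (k, i); rewrite ?mem_enum. Qed.

Lemma cycle_verticesP v : v \in cycle_vertices -> exists k i, v = cyc k i.
Proof. by case/mapP => [[k i] _ ->]; exists k, i. Qed.

Definition qx (x : 'I_4 * 'I_2) : V := qv x.1 x.2.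

Lemma qx_inj : injective qx.
Proof. by move=> [i j] [i' j'] [] /= -> ->. Qed.

Definition q_vertices : seq V := [seq qx x | x <- enum {: 'I_4 * 'I_2}].

Lemma q_vertices_uniq : uniq q_vertices.
Proof. by rewrite map_inj_uniq ?enum_uniq //; apply: qx_inj. Qed.

Lemma size_q_vertices : size q_vertices = 8.
Proof. by rewrite size_map -cardE card_prod !card_ord. Qed.

Lemma q_verticesP v : v \in q_vertices -> exists x, v = qx x.
Proof. by case/mapP => x _ ->; exists x. Qed.

Section Frame.
Variable R : realFieldType.
Local Open Scope ring_scope.
Variables (A : V -> nat * nat) (p : V -> R * R) (t : nat).
Hypothesis planar : frame_planar A p t.
Local Notation vis v := (visible A v t).

Lemma frame_inj u v : vis u -> vis v -> u <> v -> p u <> p v.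
Proof. by case: planar => inj _; apply: inj. Qed.

Lemma frame_edges_disjoint u v w x : adj u v -> adj w x -> vis u -> vis v -> vis w -> vis x ->
  u <> w -> u <> x -> v <> w -> v <> x ->
  forall E, on_seg E (p u) (p v) -> ~ on_seg E (p w) (p x).
Proof.
move=> uv wx uV vV wV xV uw ux vw vx E Euv Ewx; case: planar => _ [_ meet].
have [|y [yuv [ywx _]]] := meet u v w x uv wx uV vV wV xV _ E Euv Ewx.
  by case=> [][].
by case: yuv ywx => -> [].
Qed.

Lemma frame_edges_meet_at_end u v x : adj u v -> adj u x -> vis u -> vis v -> vis x ->
  v <> x -> forall E, on_seg E (p u) (p v) -> on_seg E (p u) (p x) -> E = p u.
Proof.
move=> uv ux uV vV xV vx E Euv Eux; case: planar => _ [_ meet].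
have uv' : u <> v by move=> e; rewrite e adj_irr in uv.
have ux' : u <> x by move=> e; rewrite e adj_irr in ux.
have [|y [yuv [yux ->]]] := meet u v u x uv ux uV vV uV xV _ E Euv Eux.
  by case=> [][].
case: yuv yux => -> // [e|e]; first by case: uv'.
by case: vx.
Qed.

Definition common_nbrs (Z1 Z2 : V) (T : seq V) : Prop :=
  {in T, forall v, [/\ vis v, adj Z1 v, adj Z2 v, v <> Z1 & v <> Z2]}.

Definition above (Z1 Z2 v : V) : bool := 0 < orient (p Z1) (p Z2) (p v).

Definition fan_set (Z1 Z2 : V) (T : seq V) : seq V := filter (above Z1 Z2) T.

Definition fan_rank (Z1 Z2 : V) (T : seq V) : V -> nat := rank p (p Z1) (p Z2) (fan_set Z1 Z2 T).

Definition fan_slot (Z1 Z2 : V) (T : seq V) : R * R -> nat :=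
  slot p (p Z1) (p Z2) (fan_set Z1 Z2 T).

Lemma common_nbrsC Z1 Z2 T : common_nbrs Z1 Z2 T -> common_nbrs Z2 Z1 T.
Proof. by move=> nb v /nb []. Qed.

Definition fan_base (Z1 Z2 : V) (T : seq V) : Prop :=
  [/\ Z1 <> Z2, vis Z1, vis Z2, uniq T & common_nbrs Z1 Z2 T].

Lemma fan_base_split Y1 Y2 T : fan_base Y1 Y2 T ->
  exists Z1 Z2, [/\ (Z1 = Y1 /\ Z2 = Y2) \/ (Z1 = Y2 /\ Z2 = Y1), fan_base Z1 Z2 T &
    (size T <= (size (fan_set Z1 Z2 T)).*2.+1)%N].
Proof.
move=> [Y12 Y1V Y2V Tu nb].
set f := fun v => orient (p Y1) (p Y2) (p v).
have sign : (count (fun v => 0 < f v)%R T + count (fun v => f v < 0)%R T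
    + count (fun v => f v == 0)%R T)%N = size T.
  by elim: (T) => //= v T' <-; case: (ltgtP (f v) 0) => _; lia.
(* Two common neighbours on the line Y1 Y2 would give crossing edges. *)
have on_line : (count (fun v => f v == 0)%R T <= 1)%N.
  rewrite leqNgt; apply/negP => /(exists_two_of_count Tu) [u [w [uT wT /eqP uw /eqP fu /eqP fw]]].
  have [uV Y1u Y2u uY1 uY2] := nb u uT; have [wV Y1w Y2w wY1 wY2] := nb w wT.
  apply: (collinear_segs_meet _ fu fw).
  - by apply/eqP; apply: frame_inj.
  - exact: frame_edges_disjoint Y1u Y2w Y1V uV Y2V wV Y12 (fun e => wY1 (esym e)) uY2 uw.
  - exact: frame_edges_disjoint Y1w Y2u Y1V wV Y2V uV Y12 (fun e => uY1 (esym e)) wY2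
      (fun e => uw (esym e)).
have below : count (fun v => f v < 0)%R T = count (above Y2 Y1) T.
  by apply: eq_count => v; rewrite /above /f orient_swap oppr_lt0.
have pos : count (fun v => 0 < f v)%R T = count (above Y1 Y2) T by [].
have [le|lt] := leqP (count (above Y2 Y1) T) (count (above Y1 Y2) T).
- by exists Y1, Y2; split; [left | | rewrite size_filter -sign pos below; lia].
- exists Y2, Y1; split; [by right | | by rewrite size_filter -sign pos below; lia].
  by split=> //; [move=> e; case: Y12 | exact: common_nbrsC].
Qed.

Section FrameFan.
Variables (Z1 Z2 : V) (T : seq V).
Hypothesis base : fan_base Z1 Z2 T.

Local Notation S := (fan_set Z1 Z2 T).
Local Notation n := (size S).
Local Notation rk := (fan_rank Z1 Z2 T).

Lemma fan_uniq : uniq S.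
Proof. by case: base => _ _ _ Tu _; apply: filter_uniq. Qed.

Lemma fan_nbrs : common_nbrs Z1 Z2 S.
Proof. by case: base => _ _ _ _ Tnb v; rewrite /fan_set mem_filter => /andP[_ /Tnb]. Qed.

Lemma fan_above : {in S, forall v, 0 < orient (p Z1) (p Z2) (p v)}.
Proof. by move=> v; rewrite /fan_set mem_filter => /andP[]. Qed.

Lemma fan_noncrossing : {in S &, forall v w, v <> w ->
  forall E, on_seg E (p Z1) (p v) -> ~ on_seg E (p Z2) (p w)}.
Proof.
have [Z12 Z1V Z2V _ _] := base.
move=> v w /fan_nbrs [vV Z1v _ vZ1 vZ2] /fan_nbrs [wV _ Z2w wZ1 _] vw.
exact: frame_edges_disjoint Z1v Z2w Z1V vV Z2V wV Z12 (fun e => wZ1 (esym e)) vZ2 vw.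
Qed.

Lemma fan_rank_lt v : v \in S -> (rk v < n)%N.
Proof. exact: rank_lt. Qed.

Lemma fan_rank_neq v w : v \in S -> w \in S -> v <> w -> rk v <> rk w.
Proof. by move=> vS wS vw /(rank_inj fan_above fan_noncrossing vS wS). Qed.

Lemma fan_edge_ends x y : x \in S -> vis y -> adj x y -> y <> Z1 -> y <> Z2 ->
  forall E w, on_seg E (p x) (p y) -> w \in S -> on_fan p (p Z1) (p Z2) E w ->
  (w = x /\ E = p x) \/ (w = y /\ E = p y).
Proof.
have [_ Z1V Z2V _ _] := base; move=> xS yV xy yZ1 yZ2 E w Exy wS Ew.
have [xV Z1x Z2x xZ1 xZ2] := fan_nbrs xS; rewrite ![adj _ x]adj_sym in Z1x Z2x.
have [wx|/eqP wx] := eqVneq w x.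
  subst w; left; split=> //; case: Ew => [/on_seg_sym|] Ex.
  - exact: frame_edges_meet_at_end xy Z1x xV yV Z1V yZ1 E Exy Ex.
  - exact: frame_edges_meet_at_end xy Z2x xV yV Z2V yZ2 E Exy Ex.
have [wy|/eqP wy] := eqVneq w y.
  subst w; have [_ Z1y Z2y _ _] := fan_nbrs wS; rewrite ![adj _ y]adj_sym in Z1y Z2y.
  rewrite adj_sym in xy; move/on_seg_sym: Exy => Eyx.
  right; split=> //; case: Ew => [/on_seg_sym|] Ey.
  - exact: frame_edges_meet_at_end xy Z1y yV xV Z1V xZ1 E Eyx Ey.
  - exact: frame_edges_meet_at_end xy Z2y yV xV Z2V xZ2 E Eyx Ey.
have [wV Z1w Z2w wZ1 wZ2] := fan_nbrs wS; rewrite adj_sym in Z2w.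
have xw : x <> w by move=> e; case: wx.
have yw : y <> w by move=> e; case: wy.
case: Ew => Ew; exfalso.
- exact: frame_edges_disjoint xy Z1w xV yV Z1V wV xZ1 xw yZ1 yw E Exy Ew.
- exact: frame_edges_disjoint xy Z2w xV yV wV Z2V xw xZ2 yw yZ2 E Exy Ew.
Qed.

Lemma nbr_slot_borders x y : x \in S -> vis y -> adj x y -> y \notin S ->
  y <> Z1 -> y <> Z2 -> borders n (rk x) (fan_slot Z1 Z2 T (p y)).
Proof.
move=> xS yV xy yS yZ1 yZ2; apply: (slot_borders fan_uniq fan_above (P := p y) xS).
move=> E w Exy wS /(fan_edge_ends xS yV xy yZ1 yZ2 Exy wS) [//|[wy _]].
by rewrite -wy wS in yS.
Qed.

Lemma edge_rank_adj x y : x \in S -> y \in S -> adj x y -> adj_mod n (rk x) (rk y).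
Proof.
move=> xS yS xy; have [yV _ _ yZ1 yZ2] := fan_nbrs yS.
have xy' : x <> y by move=> e; rewrite e adj_irr in xy.
have := rank_adj_mod fan_uniq fan_above fan_noncrossing xS yS xy'; apply.
exact: fan_edge_ends xS yV xy yZ1 yZ2.
Qed.

Lemma edge_rank_boundary x y : x \in S -> y \in T -> y \notin S -> adj x y ->
  rk x = 0%N \/ rk x = n.-1.
Proof.
have [_ _ _ _ Tnb] := base; move=> xS yT yS xy; have [yV _ _ yZ1 yZ2] := Tnb y yT.
apply: borders0 (fan_rank_lt xS) _.
rewrite -(slot_below fan_above (P := p y)); first exact: nbr_slot_borders.
by move: yS; rewrite /fan_set mem_filter yT andbT /above -leNgt.
Qed.

Lemma cycle_rank_boundary v0 v1 v2 v3 : (5 <= n)%N ->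
  v0 \in S -> v1 \in T -> v2 \in T -> v3 \in T ->
  adj v0 v1 -> adj v1 v2 -> adj v2 v3 -> adj v3 v0 -> v0 <> v2 -> v1 <> v3 ->
  rk v0 = 0%N \/ rk v0 = n.-1.
Proof.
move=> n5 v0S v1T v2T v3T a01 a12 a23 a30 v02 v13.
have [v1S|v1S] := boolP (v1 \in S); last exact: edge_rank_boundary v0S v1T v1S a01.
have [v3S|v3S] := boolP (v3 \in S); last first.
  by apply: edge_rank_boundary v0S v3T v3S _; rewrite adj_sym.
exfalso; have [v2S|v2S] := boolP (v2 \in S).
  apply: (adj_mod_no_4cycle n5 (fan_rank_lt v0S) (fan_rank_lt v1S) (fan_rank_lt v2S)
    (fan_rank_lt v3S) (fan_rank_neq v0S v2S v02) (fan_rank_neq v1S v3S v13));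
  exact: edge_rank_adj.
have b1 := edge_rank_boundary v1S v2T v2S a12.
have b3 := edge_rank_boundary v3S v2T v2S (etrans (adj_sym _ _) a23).
have a01' := edge_rank_adj v0S v1S a01.
have a03 := adj_modC (edge_rank_adj v3S v0S a30).
have r13 := fan_rank_neq v1S v3S v13.
have n4 : (4 <= n)%N by apply: leq_trans n5.
have [[e1 e3]|[e1 e3]] : (rk v1 = 0 /\ rk v3 = n.-1)%N \/ (rk v1 = n.-1 /\ rk v3 = 0)%N.
  by clear -b1 b3 r13 n5; lia.
- by rewrite e1 in a01'; rewrite e3 in a03; apply: adj_mod_ends n4 (fan_rank_lt v0S) a01' a03.
- by rewrite e1 in a01'; rewrite e3 in a03; apply: adj_mod_ends n4 (fan_rank_lt v0S) a03 a01'.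
Qed.

End FrameFan.

Lemma no_three_with_seven_common_nbrs X1 X2 Z T : fan_base X1 X2 T ->
  X1 <> Z -> X2 <> Z -> vis Z -> (7 <= size T)%N -> {in T, forall v, adj Z v /\ v <> Z} ->
  False.
Proof.
move=> base X1Z X2Z ZV T7 TZ.
have [Z1 [Z2 [Zi fan half]]] := fan_base_split base.
have [ZZ1 ZZ2] : Z <> Z1 /\ Z <> Z2.
  by case: Zi => -[-> ->]; split=> e; [case: X1Z | case: X2Z | case: X2Z | case: X1Z].
have ZS : Z \notin fan_set Z1 Z2 T.
  by rewrite /fan_set mem_filter; apply/negP => /andP[_ /TZ []].
have S3 : (3 <= size (fan_set Z1 Z2 T))%N by lia.
have [a [b [c [aS bS cS [ab ac bc]]]]] := exists_three_of_size (fan_uniq fan) S3.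
have brd v : v \in fan_set Z1 Z2 T ->
    borders (size (fan_set Z1 Z2 T)) (fan_rank Z1 Z2 T v) (fan_slot Z1 Z2 T (p Z)).
  move=> vS; have [Zv _] : adj Z v /\ v <> Z.
    by apply: TZ; move: vS; rewrite /fan_set mem_filter => /andP[].
  exact: (nbr_slot_borders fan vS ZV (etrans (adj_sym _ _) Zv) ZS ZZ1 ZZ2).
have rk_neq := fan_rank_neq fan.
exact: borders_three (fan_rank_lt aS) (fan_rank_lt bS) (fan_rank_lt cS) (rk_neq a b aS bS ab)
  (rk_neq a c aS cS ac) (rk_neq b c bS cS bc) (brd a aS) (brd b bS) (brd c cS).
Qed.

Lemma no_two_common_to_cycles q q' : q <> q' -> vis q -> vis q' ->
  (forall k i,
    [/\ vis (cyc k i), adj q (cyc k i), adj q' (cyc k i), cyc k i <> q & cyc k i <> q']) ->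
  False.
Proof.
move=> qq' qV q'V qC.
have base : fan_base q q' cycle_vertices.
  by split=> //; [exact: cycle_vertices_uniq | move=> v /cycle_verticesP [k [i ->]]].
have [Z1 [Z2 [_ fan half]]] := fan_base_split base.
rewrite size_cycle_vertices in half.
have S6 : (6 <= size (fan_set Z1 Z2 cycle_vertices))%N by lia.
have bnd v : v \in fan_set Z1 Z2 cycle_vertices -> fan_rank Z1 Z2 cycle_vertices v = 0%N \/
    fan_rank Z1 Z2 cycle_vertices v = (size (fan_set Z1 Z2 cycle_vertices)).-1.
  move=> vS; have [k [i ev]] : exists k i, v = cyc k i.
    by apply: cycle_verticesP; move: vS; rewrite /fan_set mem_filter => /andP[].
  subst v; apply: (cycle_rank_boundary fan _ vS (mem_cycle_vertices k (nxt i))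
    (mem_cycle_vertices k (nxt (nxt i))) (mem_cycle_vertices k (nxt (nxt (nxt i))))).
  - by apply: leq_trans S6.
  - exact: adj_cc.
  - exact: adj_cc.
  - exact: adj_cc.
  - by rewrite -{2}(nxt4 i) adj_cc.
  - by move/cyc_inj => [_ /eqP]; rewrite eq_sym (negbTE (nxt2_neq i)).
  - by move/cyc_inj => [_ /eqP]; rewrite eq_sym (negbTE (nxt2_neq (nxt i))).
have [a [b [c [aS bS cS [ab ac bc]]]]] :=
  exists_three_of_size (fan_uniq fan) (leq_trans (isT : 3 <= 6)%N S6).
have rk_neq := fan_rank_neq fan.
have := rk_neq a b aS bS ab; have := rk_neq a c aS cS ac; have := rk_neq b c bS cS bc.
by case: (bnd a aS) => ->; case: (bnd b bS) => ->; case: (bnd c cS) => ->.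
Qed.

End Frame.

(** * The storyplan *)

Section Storyplan.
Variables (R : realFieldType) (l : nat) (A : V -> nat * nat) (p : V -> R * R).
Hypothesis story : planar_geometric_storyplan l A p.

Lemma visible_planar v t : visible A v t -> frame_planar A p t.
Proof.
case: story => [[bounds _] planar] /andP[sv ve]; apply: planar.
by have [? [? ?]] := bounds v; apply/andP; split; lia.
Qed.

Lemma adj_overlap u v : adj u v -> (A u).1 <= (A v).2 /\ (A v).1 <= (A u).2.
Proof. by case: story => [[_ meet] _] /meet [t [/andP[? ?] /andP[? ?]]]; split; lia. Qed.

Lemma start_le_end v : (A v).1 <= (A v).2.
Proof. by case: story => [[bounds _] _]; have [_ []] := bounds v. Qed.

Lemma q_disjoint_pair : exists x y, (A (qx x)).2 < (A (qx y)).1.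
Proof.
have [x1 _ min_end] := arg_minnP (fun x => (A (qx x)).2) (isT : predT (ord0, ord0)).
have [x2 _ max_start] := arg_maxnP (fun x => (A (qx x)).1) (isT : predT (ord0, ord0)).
case: (ltnP (A (qx x1)).2 (A (qx x2)).1) => [|overlap]; first by exists x1, x2.
(* Otherwise some time lies in all eight q-intervals and in the intervals of three
   consecutive vertices of A, which then have eight common visible neighbours. *)
exfalso.
set L := (A (qx x1)).2 in min_end overlap; set S := (A (qx x2)).1 in max_start overlap.
have cL k i : (A (cyc k i)).1 <= L by have [_] := adj_overlap (adj_qc x1.1 x1.2 k i).
have cS k i : S <= (A (cyc k i)).2 by have [] := adj_overlap (adj_qc x2.1 x2.2 k i).
have [i0 _ min_c] := arg_minnP (fun i => minn (A (cyc ord0 i)).2 L) (isT : predT ord0).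
set t := minn (A (cyc ord0 i0)).2 L in min_c.
have vis_c i : (A (cyc ord0 i)).1 <= t -> visible A (cyc ord0 i) t.
  move=> it; rewrite /visible it /=; apply: leq_trans (min_c i _) _ => //; exact: geq_minl.
have vis0 : visible A (cyc ord0 i0) t by apply: vis_c; rewrite leq_min start_le_end cL.
have vis1 : visible A (cyc ord0 (nxt i0)) t.
  by apply: vis_c; rewrite leq_min cL (adj_overlap (adj_cc ord0 i0)).2.
have vis3 : visible A (cyc ord0 (nxt (nxt (nxt i0)))) t.
  have := adj_cc ord0 (nxt (nxt (nxt i0))); rewrite nxt4 => /adj_overlap [+ _].
  by move=> le; apply: vis_c; rewrite leq_min cL le.
have vis_q v : v \in q_vertices -> visible A v t.
  move=> /q_verticesP [x ->]; rewrite /visible; apply/andP; split.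
  - by apply: leq_trans (max_start x _) _; rewrite // leq_min cS.
  - by apply: leq_trans (geq_minr _ _) (min_end x _).
have neq_c i i' : i != i' -> cyc ord0 i <> cyc ord0 i' by move=> ii' /cyc_inj [_ /eqP]; apply/negP.
have q_nbr k i v : v \in q_vertices -> adj (cyc k i) v /\ v <> cyc k i.
  by move=> /q_verticesP [x ->]; rewrite adj_sym adj_qc.
apply: (no_three_with_seven_common_nbrs (visible_planar vis0) (Z := cyc ord0 (nxt (nxt (nxt i0))))
  (X1 := cyc ord0 i0) (X2 := cyc ord0 (nxt i0)) (T := q_vertices)).
- split=> //; first by apply: neq_c; rewrite eq_sym nxt_neq.
  + exact: q_vertices_uniq.
  + move=> v vT; have [? ?] := q_nbr ord0 i0 v vT; have [? ?] := q_nbr ord0 (nxt i0) v vT.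
    by split=> //; apply: vis_q.
- by apply: neq_c; rewrite eq_sym nxt3_neq.
- by apply: neq_c; rewrite eq_sym nxt2_neq.
- exact: vis3.
- by rewrite size_q_vertices.
- exact: q_nbr.
Qed.

Definition cycle_window (M1 M2 : nat) : Prop := [/\ M1 <= M2,
  forall t, M1 <= t <= M2 -> forall k i, visible A (cyc k i) t,
  forall x, M1 <= (A (qx x)).2 & forall x, (A (qx x)).1 <= M2].

Lemma cycle_window_exists : exists M1 M2, cycle_window M1 M2.
Proof.
have [c1 _ max_start] :=
  arg_maxnP (fun c : 'I_3 * 'I_4 => (A (cyc c.1 c.2)).1) (isT : predT (ord0, ord0)).
have [c2 _ min_end] :=
  arg_minnP (fun c : 'I_3 * 'I_4 => (A (cyc c.1 c.2)).2) (isT : predT (ord0, ord0)).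
have [x [y xy]] := q_disjoint_pair.
exists (A (cyc c1.1 c1.2)).1, (A (cyc c2.1 c2.2)).2; split.
- have [_ c1x] := adj_overlap (adj_qc x.1 x.2 c1.1 c1.2).
  have [yc2 _] := adj_overlap (adj_qc y.1 y.2 c2.1 c2.2).
  by apply: leq_trans c1x (leq_trans (ltnW xy) yc2).
- move=> t /andP[M1t tM2] k i; rewrite /visible.
  by rewrite (leq_trans (max_start (k, i) _) M1t) ?(leq_trans tM2 (min_end (k, i) _)).
- by move=> z; have [] := adj_overlap (adj_qc z.1 z.2 c1.1 c1.2).
- by move=> z; have [] := adj_overlap (adj_qc z.1 z.2 c2.1 c2.2).
Qed.

Section Window.
Variables M1 M2 : nat.
Hypothesis window : cycle_window M1 M2.

Lemma window_exclusive t x y : M1 <= t <= M2 -> x != y ->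
  visible A (qx x) t -> visible A (qx y) t -> False.
Proof.
case: window => _ cyc_vis _ _ Mt xy vx vy.
apply: (no_two_common_to_cycles (visible_planar vx) _ vx vy) => [/qx_inj /eqP|k i].
  exact/negP.
by split=> //; apply: cyc_vis.
Qed.

Definition in_window x : bool := (M1 <= (A (qx x)).1) && ((A (qx x)).2 <= M2).

Lemma in_window_inj x y : in_window x -> in_window y -> A (qx x) = A (qx y) -> x = y.
Proof.
move=> /andP[M1x xM2] _ Axy; have [//|xy] := eqVneq x y.
case: (window_exclusive (t := (A (qx x)).1) _ xy).
- by rewrite M1x (leq_trans (start_le_end _) xM2).
- by rewrite /visible leqnn start_le_end.
- by rewrite /visible Axy leqnn start_le_end.
Qed.

Lemma count_in_window : 6 <= count in_window (enum {: 'I_4 * 'I_2}).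
Proof.
case: window => M12 _ qM1 qM2; set xs := enum _.
have early : count (fun x => (A (qx x)).1 < M1) xs <= 1.
  apply: count_le1 (enum_uniq _) _ => x y _ _ xy xM1 yM1.
  apply: (window_exclusive (t := M1) _ xy); rewrite /visible ?leqnn ?M12 ?qM1 ?andbT //.
  - exact: ltnW xM1.
  - exact: ltnW yM1.
have late : count (fun x => M2 < (A (qx x)).2) xs <= 1.
  apply: count_le1 (enum_uniq _) _ => x y _ _ xy xM2 yM2.
  apply: (window_exclusive (t := M2) _ xy); rewrite /visible ?leqnn ?M12 ?qM2 //=.
  - exact: ltnW xM2.
  - exact: ltnW yM2.
have out_sub : subpred (predC in_window)
    (predU (fun x => (A (qx x)).1 < M1) (fun x => M2 < (A (qx x)).2)).
  by move=> x; rewrite /= negb_and -!ltnNge.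
have := count_predC in_window xs; have := sub_count out_sub xs.
have := count_predUI (fun x => (A (qx x)).1 < M1) (fun x => M2 < (A (qx x)).2) xs.
have size_xs : size xs = 8 by rewrite /xs -cardE card_prod !card_ord.
by rewrite size_xs; lia.
Qed.

End Window.

End Storyplan.

Theorem lemma3 (R : realFieldType) (l : nat) (A : V -> nat * nat)
    (p : V -> R * R) :
  planar_geometric_storyplan l A p ->
  exists I' : seq (nat * nat),
    uniq I' /\ (6 <= size I')%N /\
    (forall iv, iv \in I' -> exists (i : 'I_4) (j : 'I_2), iv = A (qv i j)) /\
    (forall iv, iv \in I' -> forall t, (iv.1 <= t <= iv.2)%N ->
       forall (k : 'I_3) (i : 'I_4), visible A (cyc k i) t).
Proof.
move=> story; have [M1 [M2 window]] := cycle_window_exists story.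
exists [seq A (qx x) | x <- enum {: 'I_4 * 'I_2} & in_window A M1 M2 x].
split; [|split; [|split]].
- rewrite map_inj_in_uniq ?(filter_uniq _ (enum_uniq _)) // => x y.
  by rewrite !mem_filter => /andP[xW _] /andP[yW _]; exact: (in_window_inj story window xW yW).
- by rewrite size_map size_filter; exact: (count_in_window story window).
- by move=> iv /mapP [x _ ->]; exists x.1, x.2.
- move=> iv /mapP [x]; rewrite mem_filter => /andP[/andP[M1x xM2] _] -> t /andP[xt tx].
  case: window => _ cyc_vis _ _; apply: cyc_vis.
  by rewrite (leq_trans M1x xt) (leq_trans tx xM2).
Qed.
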